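(* Let $G$ be a connected graph of order $n\ge 4$ such that $px_k(G)=2$ for each integer $k$ with $3\leq k\leq n-1$. Then $px_n(G)=2$ if $G$ is traceable (has a Hamilton path), and $px_n(G)=3$ otherwise.
   Context: All graphs are finite, simple, undirected and connected. An edge-coloring of a graph assigns a color to each edge (adjacent edges may receive the same color). A tree in an edge-colored graph is proper if any two adjacent edges of the tree receive different colors. For $S\subseteq V(G)$, an $S$-tree is a subgraph of $G$ that is a tree containing all vertices of $S$. For a connected graph $G$ of order $n$ and an integer $k$ with $2\le k\le n$, an edge-coloring of $G$ is a $k$-proper coloring if for every set $S$ of $k$ vertices of $G$ there exists a proper $S$-tree in $G$. The $k$-proper index $px_k(G)$ is the minimum number of colors used in a $k$-proper coloring of $G$. *)

From mathcomp Require Import all_boot.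
Set Implicit Arguments. Unset Strict Implicit. Unset Printing Implicit Defensive.

Definition simple_graph (T : finType) (e : rel T) : Prop :=
  symmetric e /\ irreflexive e.

Definition graph_connected (T : finType) (e : rel T) : Prop :=
  forall x y : T, connect e x y.

Definition edge_coloring (T : finType) (e : rel T) (c : T -> T -> nat) : Prop :=
  forall x y, e x y -> c x y = c y x.

Definition num_colors (T : finType) (e : rel T) (c : T -> T -> nat) : nat :=
  size (undup [seq c x y | x <- enum T, y <- [seq z <- enum T | e x z]]).

Definition subgraph (T : finType) (e : rel T) (V : {set T}) (F : rel T) : Prop :=
  symmetric F /\ (forall x y, F x y -> e x y /\ x \in V /\ y \in V).

Definition is_tree (T : finType) (V : {set T}) (F : rel T) : Prop :=
  (V != set0) /\
  (forall x y, x \in V -> y \in V -> connect F x y) /\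
  (forall s : seq T, ~ [&& cycle F s, uniq s & 2 < size s]).

Definition proper_sub (T : finType) (F : rel T) (c : T -> T -> nat) : Prop :=
  forall x y z, F x y -> F y z -> x != z -> c x y != c y z.

Definition k_proper_coloring (T : finType) (e : rel T) (k : nat)
    (c : T -> T -> nat) : Prop :=
  edge_coloring e c /\
  forall S : {set T}, #|S| = k ->
    exists (V : {set T}) (F : rel T),
      [/\ S \subset V, subgraph e V F, is_tree V F & proper_sub F c].

Definition proper_index_is (T : finType) (e : rel T) (k m : nat) : Prop :=
  (exists c, k_proper_coloring e k c /\ num_colors e c = m) /\
  (forall c, k_proper_coloring e k c -> m <= num_colors e c).

Definition traceable (T : finType) (e : rel T) : Prop :=
  exists (x : T) (p : seq T), [/\ path e x p, uniq (x :: p) & size (x :: p) = #|T|].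

From Pilot Require Import Defs.
From mathcomp Require Import all_boot zify.
Set Implicit Arguments. Unset Strict Implicit. Unset Printing Implicit Defensive.

(* A proper tree coloured with at most two colours has maximum degree two, since
   the edges at a vertex of degree three would need three colours; a spanning one
   is therefore a Hamilton path, and for n >= 3 two of its edges are adjacent, so
   px_n(G) >= 2, and px_n(G) >= 3 when G is not traceable.  Colouring a Hamilton
   path alternately shows px_n(G) = 2 for traceable G.  Otherwise the proper tree
   of a 2-colouring for the n-1 vertices other than v cannot contain v, so it
   misses exactly v; attaching v as a leaf by an edge of a fresh colour gives a
   proper spanning tree with three colours. *)

(* Unqualified, [proper_sub] denotes the fintype lemma about [\proper]. *)

Section Colors.
Variables (T : finType) (e : rel T) (c : T -> T -> nat).

Definition colors : seq nat :=
  undup [seq c x y | x <- enum T, y <- [seq z <- enum T | e x z]].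

Lemma mem_colors x y : e x y -> c x y \in colors.
Proof.
move=> exy; rewrite mem_undup; apply/allpairsPdep; exists x, y.
by rewrite mem_enum mem_filter mem_enum exy.
Qed.

Lemma colors_edge k : k \in colors -> exists x y, e x y /\ k = c x y.
Proof.
rewrite mem_undup => /allpairsPdep [x [y [_]]].
by rewrite mem_filter => /andP [exy _] ->; exists x, y.
Qed.

Lemma num_colors_leq (s : seq nat) :
  (forall x y, e x y -> c x y \in s) -> num_colors e c <= size s.
Proof.
move=> es; apply: uniq_leq_size; first exact: undup_uniq.
by move=> k /colors_edge [x [y [exy ->]]]; exact: es.
Qed.

Lemma leq_num_colors (s : seq nat) :
  uniq s -> {subset s <= colors} -> size s <= num_colors e c.
Proof. exact: uniq_leq_size. Qed.

Definition fresh_color : nat := (\max_(k <- colors) k).+1.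

Lemma fresh_colorP x y : e x y -> c x y < fresh_color.
Proof. by move/mem_colors => exy; rewrite ltnS (@leq_bigmax_seq _ _ xpredT id _ exy). Qed.

End Colors.

Lemma cycle_neighbours (T : eqType) (F : rel T) (s : seq T) (w : T) :
  cycle F s -> uniq s -> 2 < size s -> w \in s ->
  exists a b, [/\ a != b, a \in s, b \in s, F w a & F b w].
Proof.
move=> cs us ss /rot_to [i s' def_s].
have ms x : x \in w :: s' -> x \in s by rewrite -def_s mem_rot.
move: cs us ss; rewrite -(rot_cycle i) -(rot_uniq i) -(size_rot i) def_s.
case: s' ms {def_s} => [|a t] //; case/lastP: t => [|t b] //= ms.
rewrite rcons_path last_rcons mem_rcons inE => /and3P [Fwa _ Fbw].
case/andP => _ /andP [/norP [ab _] _] _.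
by exists a, b; rewrite ab Fwa Fbw !ms // !inE ?mem_rcons ?inE eqxx !orbT.
Qed.

Lemma connect_exit (T : finType) (F : rel T) (s : seq T) x t :
  connect F x t -> x \in s -> t \notin s ->
  exists y z, [/\ y \in s, z \notin s & F y z].
Proof.
case/connectP=> r; elim: r x => [|z r IH] x /=; first by move=> _ -> ->.
case/andP=> Fxz pr tl xs ts; have [zs|zs] := boolP (z \in s).
  exact: IH pr tl zs ts.
by exists x, z.
Qed.

Section HamiltonianPath.
Variables (T : finType) (F : rel T).
Hypothesis symF : symmetric F.
Hypothesis connF : forall x y, connect F x y.
Hypothesis deg_le2 : forall w a b d, F w a -> F w b -> F w d -> ~~ uniq [:: a; b; d].

Lemma path_grow x p y z :
  path F x p -> uniq (x :: p) -> y \in x :: p -> z \notin x :: p -> F y z ->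
  exists x' p', [/\ path F x' p', uniq (x' :: p') & size p' = (size p).+1].
Proof.
move=> pth uq yq zq Fyz.
have [ylast|ynl] := eqVneq y (last x p).
  exists x, (rcons p z); rewrite size_rcons rcons_path pth -ylast Fyz.
  by rewrite -rcons_cons rcons_uniq zq uq.
have [yx|ynx] := eqVneq y x.
  by exists z, (x :: p); rewrite cons_uniq zq uq /= pth symF -yx Fyz.
have yp : y \in p by move: yq; rewrite inE (negPf ynx).
case/splitPr: yp pth uq ynl zq => p1 [|b p2] pth uq ynl zq.
  by rewrite last_cat eqxx in ynl.
rewrite cat_path /= in pth; case/and3P: pth => _ Fay /andP [Fyb _].
have [] := negP (deg_le2 Fyb Fyz (_ : F y (last x p1))); first by rewrite symF.
have bA : b \notin x :: p1.
  move: uq; rewrite -cat_cons cat_uniq => /and3P [_ /hasPn hb _].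
  by apply: hb; rewrite !inE eqxx orbT.
have zA : z \notin x :: p1 by apply: contra zq; rewrite -cat_cons mem_cat => ->.
have zb : z != b by apply: contraNneq zq => ->; rewrite -cat_cons mem_cat !inE eqxx !orbT.
rewrite /= !inE negb_or eq_sym zb andbT /=.
by apply/andP; split; [apply: contraNneq bA | apply: contraNneq zA] => ->;
  exact: mem_last.
Qed.

Lemma hamiltonian_path : 0 < #|T| ->
  exists x p, [/\ path F x p, uniq (x :: p) & size (x :: p) = #|T|].
Proof.
move=> nT0; have [x0 _] := card_gt0P nT0.
suff grow m : m < #|T| -> exists x p, [/\ path F x p, uniq (x :: p) & size p = m].
  have [|x [p [pth uq sz]]] := grow #|T|.-1; first by rewrite prednK.
  by exists x, p; rewrite /= sz prednK.
elim: m => [_|m IH lt_mT]; first by exists x0, [::].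
have [x [p [pth uq sz]]] := IH (ltnW lt_mT).
have [t tq] : exists t, t \notin x :: p.
  apply/existsP; rewrite -negb_forall; apply: contraL lt_mT => /forallP all_in.
  rewrite -leqNgt -sz -[(size p).+1]/(size (x :: p)) -(card_uniqP uq).
  by apply/subset_leq_card/subsetP=> t _; exact: all_in.
have [y [z [yq zq Fyz]]] := connect_exit (connF x t) (mem_head x p) tq.
have [x' [p' [pth' uq' sz']]] := path_grow pth uq yq zq Fyz.
by exists x', p'; rewrite sz' sz.
Qed.

End HamiltonianPath.

Section TwoColoredSpanningTrees.
Variables (T : finType) (e : rel T) (c : T -> T -> nat).

Lemma proper_sub_neighbours (F : rel T) w a b :
  edge_coloring e c -> symmetric F -> subrel F e -> Defs.proper_sub F c ->
  F w a -> F w b -> a != b -> c w a != c w b.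
Proof.
move=> ec symF Fe pr Fwa Fwb ab.
by rewrite (ec _ _ (Fe _ _ Fwa)); apply: pr; rewrite // symF.
Qed.

Lemma two_colored_deg_le2 (F : rel T) w a b d :
  edge_coloring e c -> symmetric F -> subrel F e -> Defs.proper_sub F c ->
  num_colors e c <= 2 -> F w a -> F w b -> F w d -> ~~ uniq [:: a; b; d].
Proof.
move=> ec symF Fe pr nc2 Fwa Fwb Fwd; apply/negP=> /and3P [].
rewrite !inE negb_or => /andP [ab ad] bd _.
have cw := proper_sub_neighbours ec symF Fe pr.
suff : 3 <= num_colors e c by move/leq_trans/(_ nc2).
apply: (@leq_num_colors _ e c [:: c w a; c w b; c w d]).
  by rewrite /= !inE negb_or !cw.
by move=> k; rewrite !inE => /or3P [] /eqP ->; apply/mem_colors/Fe.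
Qed.

Lemma spanning_proper_subgraph :
  k_proper_coloring e #|T| c ->
  exists F : rel T,
    [/\ symmetric F, subrel F e, forall x y, connect F x y & Defs.proper_sub F c].
Proof.
case=> _ /(_ setT (cardsT T)) [V [F [sTV [symF FV] [_ [connV _] pr]]]].
have inV x : x \in V by apply: (subsetP sTV); rewrite inE.
by exists F; split=> // [x y /FV [] | x y]; last exact: connV.
Qed.

Lemma two_colored_hamiltonian_path :
  0 < #|T| -> k_proper_coloring e #|T| c -> num_colors e c <= 2 ->
  exists F x p, [/\ subrel F e, Defs.proper_sub F c, path F x p,
                    uniq (x :: p) & size (x :: p) = #|T|].
Proof.
move=> nT0 kp nc2; have [F [symF Fe connF pr]] := spanning_proper_subgraph kp.
have deg_le2 := two_colored_deg_le2 kp.1 symF Fe pr nc2.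
have [x [p [pth uq sz]]] := hamiltonian_path symF connF deg_le2 nT0.
by exists F, x, p.
Qed.

Lemma traceable_of_two_colored :
  0 < #|T| -> k_proper_coloring e #|T| c -> num_colors e c <= 2 -> traceable e.
Proof.
move=> nT0 kp nc2; have [F [x [p [Fe _ pth uq sz]]]] := two_colored_hamiltonian_path nT0 kp nc2.
by exists x, p; split=> //; exact: sub_path pth.
Qed.

Lemma two_le_num_colors : 3 <= #|T| -> k_proper_coloring e #|T| c -> 2 <= num_colors e c.
Proof.
move=> nT3 kp; case: (leqP (num_colors e c) 2) => [nc2|/ltnW //].
have [F [x [p [Fe pr pth uq sz]]]] := two_colored_hamiltonian_path (ltnW (ltnW nT3)) kp nc2.
case: p => [|b [|d p]] in pth uq sz *; rewrite -sz // in nT3.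
case/and3P: pth => Fxb Fbd _; apply: (@leq_num_colors _ e c [:: c x b; c b d]).
  by rewrite /= inE pr //; move: uq; rewrite /= !inE => /andP [/norP [_ /norP [] ]].
by move=> k; rewrite !inE => /orP [] /eqP ->; apply/mem_colors/Fe.
Qed.

Lemma three_le_num_colors :
  0 < #|T| -> ~ traceable e -> k_proper_coloring e #|T| c -> 3 <= num_colors e c.
Proof.
move=> nT0 ntr kp; rewrite ltnNge; apply/negP=> nc2.
exact/ntr/(traceable_of_two_colored nT0 kp nc2).
Qed.

End TwoColoredSpanningTrees.

Lemma mem_uniq_card (T : finType) (q : seq T) :
  uniq q -> size q = #|T| -> forall t, t \in q.
Proof.
move=> uq sq; apply/subset_cardP; last exact/subsetP.
by rewrite (card_uniqP uq) sq.
Qed.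

Lemma k_proper_of_spanning_tree (T : finType) (e F : rel T) c k :
  edge_coloring e c -> subgraph e setT F -> is_tree setT F -> Defs.proper_sub F c ->
  k_proper_coloring e k c.
Proof. by move=> ec sF tF pr; split=> // S _; exists setT, F; rewrite subsetT. Qed.

Section HamiltonianPathColoring.
Variables (T : finType) (e : rel T) (q : seq T).

Definition path_rel : rel T :=
  fun x y => (index y q == (index x q).+1) || (index x q == (index y q).+1).

(* The edge between positions i and i+1 of q gets colour i mod 2. *)
Definition alternating_coloring : T -> T -> nat :=
  fun x y => (index x q + index y q)./2 %% 2.

Lemma path_rel_sym : symmetric path_rel.
Proof. by move=> x y; rewrite /path_rel orbC. Qed.

Lemma alternating_edge_coloring : edge_coloring e alternating_coloring.
Proof. by move=> x y _; rewrite /alternating_coloring addnC. Qed.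

Lemma num_colors_alternating : num_colors e alternating_coloring <= 2.
Proof.
apply: (@num_colors_leq _ _ _ [:: 0; 1]) => x y _; rewrite !inE /alternating_coloring.
by case: (_ %% 2) (ltn_pmod (index x q + index y q)./2 (isT : 0 < 2)) => [|[|]].
Qed.

Hypothesis q_all : forall t, t \in q.

Lemma index_q_inj : injective (index^~ q).
Proof. by move=> x y /(index_inj x (q_all x) (q_all y)). Qed.

Lemma alternating_coloring_proper : Defs.proper_sub path_rel alternating_coloring.
Proof.
move=> x y z; rewrite /path_rel /alternating_coloring => Fxy Fyz xz.
have : index x q != index z q by apply: contra xz => /eqP/index_q_inj ->.
by move: Fxy Fyz; lia.
Qed.

Lemma path_rel_acyclic (s : seq T) : ~ [&& cycle path_rel s, uniq s & 2 < size s].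
Proof.
case/and3P=> cs us ss.
(* Both cycle neighbours of the vertex of largest index sit one position below it. *)
have [|w ws w_max] := @eq_bigmax_cond _ (mem s) (index^~ q).
  by rewrite (card_uniqP us); lia.
have [a [b [ab aS bS Fwa Fbw]]] := cycle_neighbours cs us ss ws.
have := @leq_bigmax_cond _ (mem s) (index^~ q) _ aS.
have := @leq_bigmax_cond _ (mem s) (index^~ q) _ bS.
rewrite w_max => lb la; case/eqP: ab; apply: index_q_inj.
by move: Fwa Fbw la lb; rewrite /path_rel; lia.
Qed.

Hypothesis q_uniq : uniq q.

Lemma path_rel_connect x y : connect path_rel x y.
Proof.
have from_head i : i < size q -> connect path_rel (nth x q 0) (nth x q i).
  elim: i => [|i IH] lt_iq; first exact: connect0.
  apply: connect_trans (IH (ltnW lt_iq)) (connect1 _).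
  by rewrite /path_rel !index_uniq // ?eqxx // ltnW.
have at_index z : connect path_rel (nth x q 0) z.
  by rewrite -(nth_index x (q_all z)); apply: from_head; rewrite index_mem.
by apply: connect_trans (at_index y); rewrite (sym_connect_sym path_rel_sym).
Qed.

Hypotheses (e_sym : symmetric e) (q_sorted : sorted e q).

Lemma path_rel_subrel : subrel path_rel e.
Proof.
suff succ x y : index y q = (index x q).+1 -> e x y.
  by move=> x y /orP [] /eqP /succ //; rewrite e_sym.
move=> yx; have /(sortedP x)/(_ (index x q)) := q_sorted.
by rewrite -yx index_mem !nth_index //; apply.
Qed.

End HamiltonianPathColoring.

Section AddLeaf.
Variables (T : finType) (u v : T).

Definition link : rel T := fun x y => ((x == u) && (y == v)) || ((x == v) && (y == u)).

Definition add_edge (F : rel T) : rel T := fun x y => F x y || link x y.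

Definition recolor (c : T -> T -> nat) (k : nat) : T -> T -> nat :=
  fun x y => if link x y then k else c x y.

Lemma link_sym : symmetric link.
Proof. by move=> x y; rewrite /link orbC; congr (_ || _); rewrite andbC. Qed.

Lemma add_edge_sym F : symmetric F -> symmetric (add_edge F).
Proof. by move=> symF x y; rewrite /add_edge symF link_sym. Qed.

Lemma num_colors_recolor e c k : num_colors e (recolor c k) <= (num_colors e c).+1.
Proof.
apply: (@num_colors_leq _ _ _ (k :: colors e c)) => x y exy.
by rewrite /recolor inE; case: link; rewrite ?eqxx // mem_colors ?orbT.
Qed.

Lemma recolor_edge_coloring e c k : edge_coloring e c -> edge_coloring e (recolor c k).
Proof. by move=> ec x y exy; rewrite /recolor link_sym ec. Qed.

Variables (e : rel T) (V : {set T}) (F : rel T).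
Hypotheses (e_sym : symmetric e) (uV : u \in V) (vV : v \notin V) (euv : e u v).
Hypotheses (FV : subgraph e V F) (treeF : is_tree V F).

Lemma u_neq_v : u != v.
Proof. by apply: contraNneq vV => <-. Qed.

Lemma F_out_v x : F v x = false.
Proof. by apply/negP=> /FV.2 [_ [vV' _]]; move: vV; rewrite vV'. Qed.

Lemma subgraph_add_leaf : subgraph e (v |: V) (add_edge F).
Proof.
split; first exact: add_edge_sym FV.1.
move=> x y /orP [/FV.2 [exy [xV yV]] | /orP [] /andP [/eqP -> /eqP ->]].
- by rewrite !inE xV yV !orbT.
- by rewrite !inE eqxx uV orbT.
- by rewrite e_sym !inE eqxx uV orbT.
Qed.

Lemma connect_add_leaf x y : x \in v |: V -> y \in v |: V -> connect (add_edge F) x y.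
Proof.
have [_ [connF _]] := treeF.
have to_u z : z \in v |: V -> connect (add_edge F) z u.
  case/setU1P=> [->|zV]; first by apply: connect1; rewrite /add_edge /link !eqxx /= !orbT.
  by apply: connect_sub (connF _ _ zV uV) => a b Fab; apply: connect1; rewrite /add_edge Fab.
move=> /to_u xu /to_u yu; apply: connect_trans xu _.
by rewrite (sym_connect_sym (add_edge_sym FV.1)).
Qed.

Lemma acyclic_add_leaf (s : seq T) : ~ [&& cycle (add_edge F) s, uniq s & 2 < size s].
Proof.
case/and3P=> cs us ss; have [vs|vs] := boolP (v \in s).
  have v_leaf x : add_edge F v x -> x = u.
    by rewrite /add_edge /link F_out_v eqxx eq_sym (negbTE u_neq_v) /= => /eqP.
  have [a [b [/eqP ab _ _ /v_leaf va Fbv]]] := cycle_neighbours cs us ss vs.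
  rewrite add_edge_sym in Fbv; last exact: FV.1.
  by apply: ab; rewrite va (v_leaf _ Fbv).
have [_ [_ acycF]] := treeF; apply: (acycF s); rewrite us ss.
case: s cs vs {us ss} => [|x s] // cs vs.
move: cs; rewrite /cycle !andbT; apply: (sub_in_path (P := [in x :: s])).
  move=> a b /[!inE] av bv; rewrite /add_edge /link.
  by rewrite (negbTE (memPn vs _ av)) (negbTE (memPn vs _ bv)) !andbF orbF.
by apply/allP=> z; rewrite -rcons_cons mem_rcons inE => /predU1P [->|//]; exact: mem_head.
Qed.

Lemma is_tree_add_leaf : is_tree (v |: V) (add_edge F).
Proof.
split; first by apply/set0Pn; exists v; rewrite !inE eqxx.
by split; [exact: connect_add_leaf | exact: acyclic_add_leaf].
Qed.

Lemma link_trans x y z : link x y -> link y z -> x = z.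
Proof.
have uv := u_neq_v; rewrite /link.
by case/orP=> /andP [/eqP -> /eqP ->] /orP [] /andP [/eqP yx /eqP ->] //;
  rewrite yx eqxx in uv.
Qed.

Lemma proper_add_leaf c k :
  (forall x y, F x y -> c x y != k) -> Defs.proper_sub F c ->
  Defs.proper_sub (add_edge F) (recolor c k).
Proof.
move=> Fk pr x y z; rewrite /add_edge /recolor.
case lxy: (link x y); case lyz: (link y z); rewrite ?orbF => Fxy Fyz xz.
- by rewrite (link_trans lxy lyz) eqxx in xz.
- by rewrite eq_sym Fk.
- exact: Fk.
- exact: pr.
Qed.

End AddLeaf.

Lemma traceable_two_colored_proper (T : finType) (e : rel T) k :
  simple_graph e -> traceable e ->
  exists c, k_proper_coloring e k c /\ num_colors e c <= 2.
Proof.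
move=> [e_sym _] [x [p [pth uq sz]]]; have q_all := mem_uniq_card uq sz.
exists (alternating_coloring (x :: p)); split; last exact: num_colors_alternating.
apply: (@k_proper_of_spanning_tree _ _ (path_rel (x :: p))).
- exact: alternating_edge_coloring.
- split=> [|a b /(path_rel_subrel q_all e_sym pth) eab]; first exact: path_rel_sym.
  by rewrite !inE.
- split; first by apply/set0Pn; exists x; rewrite inE.
  by split=> [a b _ _|]; [exact: path_rel_connect | exact: path_rel_acyclic].
- exact: alternating_coloring_proper.
Qed.

Lemma exists_neighbour (T : finType) (e : rel T) v :
  graph_connected e -> 1 < #|T| -> exists u, e v u.
Proof.
move=> conn nT2; have [y] : exists y, y \in [set~ v].
  by apply/card_gt0P; rewrite cardsC1; case: #|T| nT2.
rewrite !inE; case/connectP: (conn v y) => [[|u s]] /=; first by move=> _ <-; rewrite eqxx.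
by case/andP=> evu _ _ _; exists u.
Qed.

Lemma k_proper_card_from_pred (T : finType) (e : rel T) c :
  simple_graph e -> graph_connected e -> 1 < #|T| -> k_proper_coloring e #|T|.-1 c ->
  exists c', k_proper_coloring e #|T| c' /\ num_colors e c' <= (num_colors e c).+1.
Proof.
move=> [e_sym e_irr] conn nT2 [ec kp]; have [v _] := card_gt0P (ltnW nT2).
have [V [F [sV FV treeF pr]]] := kp [set~ v] (cardsC1 v).
have cover_V x : x != v -> x \in V by move=> xv; apply: (subsetP sV); rewrite !inE.
have [vV|vV] := boolP (v \in V).
  have VT : V = setT.
    by apply/setP=> x; rewrite inE; have [->|/cover_V] := eqVneq x v.
  exists c; split=> //; rewrite VT in FV treeF.
  exact: k_proper_of_spanning_tree FV treeF pr.
have [u evu] := exists_neighbour v conn nT2.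
have uV : u \in V by apply: cover_V; apply: contraTneq evu => ->; rewrite e_irr.
have vVT : v |: V = setT.
  by apply/setP=> x; rewrite !inE; have [//|/cover_V ->] := eqVneq x v; rewrite orbT.
exists (recolor u v c (fresh_color e c)); split; last exact: num_colors_recolor.
have euv : e u v by rewrite e_sym.
apply: (@k_proper_of_spanning_tree _ _ (add_edge u v F)).
- exact: recolor_edge_coloring.
- by rewrite -vVT; exact: subgraph_add_leaf.
- by rewrite -vVT; exact: (is_tree_add_leaf (e := e)).
apply: (proper_add_leaf (V := V)) => // x y /FV.2 [exy _].
by rewrite neq_ltn fresh_colorP.
Qed.

Lemma proper_index_is_intro (T : finType) (e : rel T) k m c :
  k_proper_coloring e k c -> num_colors e c <= m ->
  (forall c', k_proper_coloring e k c' -> m <= num_colors e c') -> proper_index_is e k m.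
Proof.
move=> kp cm lb; split=> //; exists c; split=> //.
by apply/eqP; rewrite eqn_leq cm lb.
Qed.

Theorem mainTheorem6 (T : finType) (e : rel T) :
  simple_graph e -> graph_connected e -> 4 <= #|T| ->
  (forall k, 3 <= k <= #|T|.-1 -> proper_index_is e k 2) ->
  (traceable e -> proper_index_is e #|T| 2) /\
  (~ traceable e -> proper_index_is e #|T| 3).
Proof.
move=> sg conn nT4 px.
have [[c0 [kp0 nc0]] _] := px #|T|.-1 ltac:(lia).
split=> [tr | ntr].
  have [c [kp nc2]] := traceable_two_colored_proper #|T| sg tr.
  apply: proper_index_is_intro kp nc2 _ => c'.
  by apply: two_le_num_colors; lia.
have [c [kp]] := k_proper_card_from_pred sg conn ltac:(lia) kp0; rewrite nc0 => nc3.
apply: proper_index_is_intro kp nc3 _ => c'.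
by apply: three_le_num_colors; [lia | exact: ntr].
Qed.
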